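(* For every positive integer $n$, $\mathrm{ex}(n,K_3,T_1)=\mathrm{ex}(n,K_3,P_4)=\mathcal{N}(K_3,D(3,n))=\lfloor n/3\rfloor$.
   Context: $T_1$ (the paw) is a triangle together with one further vertex joined to exactly one vertex of the triangle; $P_4$ is the path on $4$ vertices. $D(3,n)$ is the graph on $n$ vertices consisting of $\lfloor n/3\rfloor$ vertex-disjoint triangles and a clique on the remaining vertices. For graphs $H,G$, $\mathcal{N}(H,G)$ is the number of subgraphs of $G$ isomorphic to $H$, and $\mathrm{ex}(n,H,F)$ is the maximum of $\mathcal{N}(H,G)$ over $F$-free graphs $G$ on $n$ vertices. *)

From mathcomp Require Import all_boot all_order.
Set Implicit Arguments. Unset Strict Implicit. Unset Printing Implicit Defensive.

Definition is_simple (T : finType) (e : rel T) : bool :=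
  [forall x, ~~ e x x] && [forall x, forall y, e x y == e y x].

(* injective homomorphisms (embeddings as not-necessarily-induced subgraphs) *)
Definition is_emb (TH TG : finType) (eH : rel TH) (eG : rel TG)
  (f : {ffun TH -> TG}) : bool :=
  injectiveb f && [forall u, forall v, eH u v ==> eG (f u) (f v)].

(* the subgraphs of G isomorphic to H: images (vertex set, edge set) of
   embeddings of H into G *)
Definition copies (TH TG : finType) (eH : rel TH) (eG : rel TG)
  : {set ({set TG} * {set {set TG}})} :=
  [set (f @: [set: TH], [set [set f uv.1; f uv.2] | uv in [set uv : TH * TH | eH uv.1 uv.2]])
     | f : {ffun TH -> TG} & is_emb eH eG f].

Definition numSub (TH TG : finType) (eH : rel TH) (eG : rel TG) : nat :=
  #|copies eH eG|.

Definition free (TF TG : finType) (eF : rel TF) (eG : rel TG) : bool :=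
  numSub eF eG == 0.

Definition adj n (g : {ffun 'I_n * 'I_n -> bool}) : rel 'I_n :=
  fun x y => g (x, y).

Definition exGen (n : nat) (TH TF : finType) (eH : rel TH) (eF : rel TF) : nat :=
  \max_(g : {ffun 'I_n * 'I_n -> bool} | is_simple (adj g) && free eF (adj g))
     numSub eH (adj g).

Definition K3 : rel 'I_3 := fun x y => x != y.

(* the paw T_1 on 'I_4: triangle 0,1,2 and vertex 3 joined to 0 *)
Definition paw_edge (a b : nat) : bool :=
  [|| (a == 0) && (b == 1), (a == 1) && (b == 2), (a == 0) && (b == 2)
    | (a == 0) && (b == 3)].
Definition paw : rel 'I_4 := fun x y => paw_edge x y || paw_edge y x.

Definition P4 : rel 'I_4 := fun x y => (x.+1 == y :> nat) || (y.+1 == x :> nat).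

(* D(3,n) on 'I_n: blocks {3k,3k+1,3k+2} are triangles (k < n/3); the
   remaining n mod 3 vertices form the last block, which is a clique. *)
Definition D3 (n : nat) : rel 'I_n :=
  fun x y => (x != y) && (x %/ 3 == y %/ 3).
Arguments D3 n : clear implicits.
Arguments exGen n {TH TF} eH eF.

From mathcomp Require Import all_boot all_order zify.
From Stdlib Require Import FunctionalExtensionality.
Set Implicit Arguments. Unset Strict Implicit. Unset Printing Implicit Defensive.

(* In a paw-free or P4-free graph no vertex outside a triangle is adjacent to
   it: a triangle abc with a pendant edge aw contains the paw abc+aw and the
   path w-a-b-c.  Hence distinct triangles are vertex-disjoint and there are at
   most n/3 of them.  D(3,n) attains this bound, and since each of its
   components has at most three vertices it contains no connected graph on four
   vertices, in particular neither the paw nor P4. *)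

Lemma simple_sym (T : finType) (e : rel T) : is_simple e -> symmetric e.
Proof. by case/andP=> _ /forallP e_sym x y; apply/eqP/(forallP (e_sym x)). Qed.

Lemma numSub_eq0P (TH T : finType) (eH : rel TH) (e : rel T) :
  reflect (forall f, ~~ is_emb eH e f) (numSub eH e == 0).
Proof.
rewrite cards_eq0; apply: (iffP idP) => [noC f | noemb].
  apply: contraTN noC => embf; apply/set0Pn.
  by eexists; apply/imsetP; exists f; rewrite ?inE.
apply/eqP/setP => p; rewrite inE; apply/negbTE/imsetP => -[f].
by rewrite inE (negbTE (noemb f)).
Qed.

Lemma nth_is_emb (T : finType) (e : rel T) k (eH : rel 'I_k) (s : seq T) x0 :
  uniq s -> size s = k ->
  {homo (fun i : 'I_k => nth x0 s i) : u v / eH u v >-> e u v} ->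
  is_emb eH e [ffun i : 'I_k => nth x0 s i].
Proof.
move=> s_uniq s_size s_hom; apply/andP; split.
  apply/injectiveP => i j; rewrite !ffunE => /eqP.
  by rewrite nth_uniq ?s_size // => /eqP/val_inj.
by apply/forallP => u; apply/forallP => v; apply/implyP; rewrite !ffunE; apply: s_hom.
Qed.

Section Triangles.
Variables (T : finType) (e : rel T).

Definition clique (B : {set T}) := {in B &, forall x y, x != y -> e x y}.

Lemma K3_copy_clique (f : {ffun 'I_3 -> T}) :
  is_emb K3 e f -> #|f @: setT| = 3 /\ clique (f @: setT).
Proof.
case/andP=> /injectiveP f_inj /forallP f_hom; split.
  by rewrite card_imset // cardsT card_ord.
move=> _ _ /imsetP[u _ ->] /imsetP[v _ ->] fu_fv.
by apply: (implyP (forallP (f_hom u) v)); apply: contraNneq fu_fv => ->.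
Qed.

Lemma K3_copy_edges (f : {ffun 'I_3 -> T}) : injective f ->
  [set [set f uv.1; f uv.2] | uv in [set uv : 'I_3 * 'I_3 | K3 uv.1 uv.2]] =
  [set s : {set T} | (s \subset f @: setT) && (#|s| == 2)].
Proof.
move=> f_inj; apply/setP => s; rewrite inE; apply/imsetP/andP.
  case=> -[u v]; rewrite inE /K3 /= => uv ->; split.
    by apply/subsetP => x; rewrite !inE => /orP[]/eqP->; apply: imset_f.
  by rewrite cards2 (inj_eq f_inj) uv.
case=> /subsetP s_sub /cards2P[x [y [xy s_xy]]].
have /imsetP[u _ fu] : x \in f @: setT by apply: s_sub; rewrite s_xy set21.
have /imsetP[v _ fv] : y \in f @: setT by apply: s_sub; rewrite s_xy set22.
exists (u, v); last by rewrite s_xy fu fv.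
by rewrite inE /K3 /=; apply: contraNneq xy => uv; rewrite fu fv uv.
Qed.

Definition triangle_sets := [set p.1 | p in copies K3 e].

Lemma card_triangle_sets : #|triangle_sets| = numSub K3 e.
Proof.
rewrite card_in_imset // => p q /imsetP[f1 + ->] /imsetP[f2 + ->] /=.
rewrite !inE => /andP[/injectiveP f1_inj _] /andP[/injectiveP f2_inj _].
by rewrite (K3_copy_edges f1_inj) (K3_copy_edges f2_inj) => ->.
Qed.

Lemma K3_copy_vertices_in (f : {ffun 'I_3 -> T}) :
  is_emb K3 e f -> f @: setT \in triangle_sets.
Proof.
move=> f_emb; apply/imsetP; eexists.
  by apply/imsetP; exists f; [rewrite inE | reflexivity].
by [].
Qed.

Lemma triangle_sets_clique (B : {set T}) : B \in triangle_sets -> #|B| = 3 /\ clique B.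
Proof. by case/imsetP=> _ /imsetP[f + ->] ->; rewrite inE; apply: K3_copy_clique. Qed.

Definition isolated_triangles :=
  forall B : {set T}, #|B| = 3 -> clique B -> forall x y, x \in B -> y \notin B -> ~~ e x y.

Hypothesis e_iso : isolated_triangles.

Lemma isolated_triangles_trivIset : trivIset triangle_sets.
Proof.
apply/trivIsetP => B1 B2 /triangle_sets_clique[card_B1 clique_B1].
move=> /triangle_sets_clique[card_B2 clique_B2] B1_B2.
rewrite -setI_eq0; apply/set0Pn => -[x]; rewrite inE => /andP[x_B1 x_B2].
have /subsetPn[y y_B2 y_B1] : ~~ (B2 \subset B1).
  by apply: contra B1_B2 => sub; rewrite eq_sym eqEcard sub card_B1 card_B2.
have /negP[] := e_iso card_B1 clique_B1 x_B1 y_B1.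
by apply: clique_B2 => //; apply: contraNneq y_B1 => <-.
Qed.

Lemma isolated_triangles_numSub_K3 : numSub K3 e <= #|T| %/ 3.
Proof.
rewrite leq_divRL // -card_triangle_sets.
have := eqP isolated_triangles_trivIset.
rewrite (eq_bigr (fun _ => 3)); last by move=> B /triangle_sets_clique[].
by rewrite sum_nat_const => ->; apply: max_card.
Qed.

End Triangles.

Lemma no_pendant_isolated_triangles (T : finType) (e : rel T) :
  (forall a b c w, uniq [:: a; b; c; w] -> e a b -> e b c -> e a c -> ~~ e a w) ->
  isolated_triangles e.
Proof.
move=> no_pendant B card_B clique_B x w x_B w_B.
have /cards2P[b [c [bc Bx]]] : #|B :\ x| == 2.
  by move: card_B; rewrite (cardsD1 x) x_B add1n => -[->].
have : b \in B :\ x by rewrite Bx set21.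
have : c \in B :\ x by rewrite Bx set22.
rewrite !inE => /andP[cx c_B] /andP[bx b_B].
have w_neq z : z \in B -> w != z by move=> z_B; apply: contraNneq w_B => ->.
apply: (no_pendant x b c w).
- by rewrite /= !inE !negb_or ![x == _]eq_sym ![_ == w]eq_sym bx cx bc !w_neq.
- by apply: clique_B; rewrite // eq_sym.
- exact: clique_B.
- by apply: clique_B; rewrite // eq_sym.
Qed.

Lemma paw_free_isolated_triangles (T : finType) (e : rel T) :
  is_simple e -> free paw e -> isolated_triangles e.
Proof.
move=> /simple_sym e_sym /numSub_eq0P paw_free.
apply: no_pendant_isolated_triangles => a b c w abcw eab ebc eac; apply/negP => eaw.
apply: (negP (paw_free [ffun i : 'I_4 => nth a [:: a; b; c; w] i])).
apply: nth_is_emb => // -[[|[|[|[|//]]]] ?] [[|[|[|[|//]]]] ?] //= _.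
all: by [|rewrite e_sym].
Qed.

Lemma P4_free_isolated_triangles (T : finType) (e : rel T) :
  is_simple e -> free P4 e -> isolated_triangles e.
Proof.
move=> /simple_sym e_sym /numSub_eq0P P4_free.
apply: no_pendant_isolated_triangles => a b c w abcw eab ebc eac; apply/negP => eaw.
apply: (negP (P4_free [ffun i : 'I_4 => nth w [:: w; a; b; c] i])).
apply: nth_is_emb => [|//|]; first by rewrite -(rot_uniq 1).
move=> -[[|[|[|[|//]]]] ?] [[|[|[|[|//]]]] ?] //= _.
all: by [|rewrite e_sym].
Qed.

Lemma paw_connected u v : connect paw u v.
Proof.
suff from0 w : connect paw ord0 w.
  by rewrite (connect_trans _ (from0 v)) // (sym_connect_sym (fun x y => orbC _ _)) from0.
case: w => [[|[|[|[|//]]]] hw]; apply/connectP.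
- by exists [::]; last exact: val_inj.
- by exists [:: Ordinal hw].
- by exists [:: Ordinal hw].
- by exists [:: Ordinal hw].
Qed.

Lemma P4_connected u v : connect P4 u v.
Proof.
suff from0 w : connect P4 ord0 w.
  by rewrite (connect_trans _ (from0 v)) // (sym_connect_sym (fun x y => orbC _ _)) from0.
case: w => [[|[|[|[|//]]]] hw]; apply/connectP.
- by exists [::]; last exact: val_inj.
- by exists [:: Ordinal hw].
- by exists [:: Ordinal (isT : 1 < 4); Ordinal hw].
- by exists [:: Ordinal (isT : 1 < 4); Ordinal (isT : 2 < 4); Ordinal hw].
Qed.

Section D3.
Variable n : nat.

Lemma D3_simple : is_simple (D3 n).
Proof.
apply/andP; split; apply/forallP => x; first by rewrite /D3 eqxx.
by apply/forallP => y; rewrite /D3 /= [x == y]eq_sym [x %/ 3 == _]eq_sym.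
Qed.

Lemma card_D3_block k : #|[set x : 'I_n | x %/ 3 == k]| <= 3.
Proof.
rewrite -{2}[3]card_ord.
apply: (leq_card_in (fun x : 'I_n => Ordinal (ltn_pmod x (isT : 0 < 3)))).
move=> x y; rewrite !inE => /eqP xk /eqP yk /(congr1 val) /= xy.
by apply: val_inj; rewrite /= (divn_eq x 3) (divn_eq y 3) xk yk xy.
Qed.

Lemma D3_free_connected (TF : finType) (eF : rel TF) :
  3 < #|TF| -> (forall u v, connect eF u v) -> free eF (D3 n).
Proof.
move=> big_F conn_F; apply/numSub_eq0P => f.
apply/negP => /andP[/injectiveP f_inj /forallP f_hom].
have /card_gt0P[u0 _] : 0 < #|TF| by apply: ltnW (ltnW (ltnW big_F)).
have f_block u : f u \in [set x : 'I_n | x %/ 3 == f u0 %/ 3].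
  have block_closed : closed eF [pred v | f v %/ 3 == f u0 %/ 3].
    move=> v v' /(implyP (forallP (f_hom v) v')) /andP[_ /eqP fvv'].
    by rewrite !inE fvv'.
  by move: (closed_connect block_closed (conn_F u0 u)); rewrite !inE eqxx => <-.
have : #|TF| <= 3.
  rewrite -cardsT -(card_imset _ f_inj) (leq_trans _ (card_D3_block (f u0 %/ 3))) //.
  by apply/subset_leq_card/subsetP => _ /imsetP[u _ ->].
by rewrite leqNgt big_F.
Qed.

Lemma D3_block_lt (k : 'I_(n %/ 3)) (i : 'I_3) : 3 * k + i < n.
Proof. by have := ltn_ord k; have := ltn_ord i; lia. Qed.

Definition D3_triangle (k : 'I_(n %/ 3)) : {ffun 'I_3 -> 'I_n} :=
  [ffun i => Ordinal (D3_block_lt k i)].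

Lemma D3_triangle_emb k : is_emb K3 (D3 n) (D3_triangle k).
Proof.
apply/andP; split.
  by apply/injectiveP => i j /(congr1 val); rewrite !ffunE /= => /addnI/val_inj.
apply/forallP => i; apply/forallP => j; apply/implyP => ij.
rewrite /D3 !ffunE /= -(inj_eq val_inj) /= eqn_add2l; apply/andP; split => //.
by apply/eqP; have := ltn_ord i; have := ltn_ord j; lia.
Qed.

Lemma D3_triangle_inj : injective (fun k => D3_triangle k @: setT).
Proof.
move=> k k' /= same.
have : D3_triangle k ord0 \in D3_triangle k' @: setT by rewrite -same imset_f.
case/imsetP=> j _ /(congr1 val); rewrite !ffunE /= addn0 => kj.
by apply: ord_inj; have := ltn_ord j; lia.
Qed.

Lemma D3_numSub_K3_ge : n %/ 3 <= numSub K3 (D3 n).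
Proof.
rewrite -card_triangle_sets -{1}[n %/ 3]card_ord -cardsT -(card_imset _ D3_triangle_inj).
apply/subset_leq_card/subsetP => _ /imsetP[k _ ->].
exact/K3_copy_vertices_in/D3_triangle_emb.
Qed.

End D3.

Lemma exGen_eq n (TH TF : finType) (eH : rel TH) (eF : rel TF) (e0 : rel 'I_n) m :
  is_simple e0 -> free eF e0 -> m <= numSub eH e0 ->
  (forall e : rel 'I_n, is_simple e -> free eF e -> numSub eH e <= m) ->
  exGen n eH eF = m.
Proof.
move=> e0_simple e0_free e0_ge max_m; apply/eqP; rewrite eqn_leq; apply/andP; split.
  by apply/bigmax_leqP => g /andP[]; apply: max_m.
have adj_e0 : adj [ffun p => e0 p.1 p.2] = e0.
  by do 2!apply: functional_extensionality => ?; rewrite /adj ffunE.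
apply: leq_trans e0_ge _; rewrite -adj_e0.
by apply: (leq_bigmax_cond (F := fun g => numSub eH (adj g))); rewrite adj_e0 e0_simple.
Qed.

Theorem mainTheorem15 (n : nat) : 0 < n ->
  exGen n K3 paw = n %/ 3 /\ exGen n K3 P4 = n %/ 3 /\
  numSub K3 (D3 n) = n %/ 3.
Proof.
move=> _.
have D3_paw_free : free paw (D3 n) by apply: D3_free_connected paw_connected; rewrite card_ord.
have D3_P4_free : free P4 (D3 n) by apply: D3_free_connected P4_connected; rewrite card_ord.
have K3_le (e : rel 'I_n) : isolated_triangles e -> numSub K3 e <= n %/ 3.
  by move=> e_iso; have := isolated_triangles_numSub_K3 e_iso; rewrite card_ord.
have D3_K3 : numSub K3 (D3 n) = n %/ 3.
  apply/eqP; rewrite eqn_leq D3_numSub_K3_ge andbT K3_le //.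
  exact: paw_free_isolated_triangles (D3_simple n) D3_paw_free.
split; [|split] => //.
- apply: exGen_eq (D3_simple n) D3_paw_free _ _; first by rewrite D3_K3.
  by move=> e e_simple e_free; apply/K3_le/paw_free_isolated_triangles.
- apply: exGen_eq (D3_simple n) D3_P4_free _ _; first by rewrite D3_K3.
  by move=> e e_simple e_free; apply/K3_le/P4_free_isolated_triangles.
Qed.
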